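(* Let $\{M_i\mid i\in I\}$ be a collection of monoids. Then the monoid free product $F=\prod_1^{*}\{M_i\mid i\in I\}$ is weakly right coherent if and only if each $M_i$ ($i\in I$) is weakly right coherent.
   Context: A monoid $M$ is weakly right coherent (WRC) if every finitely generated right ideal of $M$ is finitely presented as a right $M$-act. (It is known that a monoid is WRC iff it is right ideal Howson — the intersection of any two finitely generated right ideals is finitely generated — and finitely right equated — every right annihilator congruence $\mathbf{r}_M(a)=\{(s,t)\mid as=at\}$ is finitely generated as a right congruence.) For pairwise disjoint semigroups $S_i$, the semigroup free product $\prod^{*}\{S_i\mid i\in I\}$ consists of sequences $s_1*\dots*s_n$ with $s_j\in\bigsqcup S_i$ and consecutive entries from different $S_i$, multiplied by concatenation, multiplying the two adjacent entries if they lie in the same $S_i$. If each $M_i$ is a monoid with identity $1_i$, the monoid free product $\prod_1^{*}\{M_i\mid i\in I\}$ is the quotient of the semigroup free product by the congruence generated by $\{(1_i,1_j)\mid i,j\in I\}$. *)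

From Stdlib Require Import List ClassicalEpsilon Fin.
Import ListNotations.
Set Implicit Arguments.

Record RawMonoid := { rcar : Type; rop : rcar -> rcar -> rcar; rone : rcar }.

Record Monoid := {
  carrier : Type;
  op : carrier -> carrier -> carrier;
  one : carrier;
  op_assoc : forall a b c, op a (op b c) = op (op a b) c;
  op_one_l : forall a, op one a = a;
  op_one_r : forall a, op a one = a }.

Definition raw (M : Monoid) : RawMonoid :=
  {| rcar := carrier M; rop := @op M; rone := one M |}.

Section Coherence.
Variable S : RawMonoid.
Local Notation "x * y" := (rop S x y).

Definition free_act (n : nat) := (Fin.t n * rcar S)%type.
Definition free_act_mul n (x : free_act n) (t : rcar S) : free_act n :=
  (fst x, snd x * t).

Definition right_congruence n (rho : free_act n -> free_act n -> Prop) : Prop :=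
  (forall x, rho x x) /\ (forall x y, rho x y -> rho y x) /\
  (forall x y z, rho x y -> rho y z -> rho x z) /\
  (forall x y t, rho x y -> rho (free_act_mul x t) (free_act_mul y t)).

Definition gen_congruence n (H : list (free_act n * free_act n))
  (x y : free_act n) : Prop :=
  forall rho, right_congruence rho ->
    (forall p, In p H -> rho (fst p) (snd p)) -> rho x y.

(* A subset J of S closed under right multiplication, viewed as a right
   S-act, is finitely presented: there is an epimorphism of right acts from a
   free act of finite rank onto J whose kernel is a finitely generated
   right congruence (i.e. J is isomorphic to F_n / <H> with H finite). *)
Definition fin_presented_subact (J : rcar S -> Prop) : Prop :=
  exists (n : nat) (phi : free_act n -> rcar S) (H : list (free_act n * free_act n)),
    (forall x t, phi (free_act_mul x t) = phi x * t) /\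
    (forall x, J (phi x)) /\
    (forall a, J a -> exists x, phi x = a) /\
    (forall x y, phi x = phi y <-> gen_congruence H x y).

Definition gen_right_ideal (X : list (rcar S)) (a : rcar S) : Prop :=
  exists b s, In b X /\ a = b * s.

Definition weakly_right_coherent : Prop :=
  forall X : list (rcar S), X <> [] -> fin_presented_subact (gen_right_ideal X).

End Coherence.

Section FreeProduct.
Variable Idx : Type.
Variable M : Idx -> Monoid.

Definition letter := {i : Idx & carrier (M i)}.

Fixpoint reduced (w : list letter) : Prop :=
  match w with
  | [] => True
  | x :: w' =>
      projT2 x <> one (M (projT1 x)) /\
      match w' with [] => True | y :: _ => projT1 x <> projT1 y end /\
      reduced w'
  end.

Definition dec (P : Prop) : {P} + {~ P} := excluded_middle_informative P.

Definition lmul (x : letter) (s : list letter) : list letter :=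
  if dec (projT2 x = one (M (projT1 x))) then s else
  match s with
  | [] => [x]
  | y :: s' =>
      match dec (projT1 y = projT1 x) with
      | left e =>
          let z := @op (M (projT1 x)) (projT2 x)
                      (eq_rect _ (fun i => carrier (M i)) (projT2 y) _ e) in
          if dec (z = one (M (projT1 x))) then s'
          else existT _ (projT1 x) z :: s'
      | right _ => x :: s
      end
  end.

Lemma reduced_tail x s : reduced (x :: s) -> reduced s.
Proof. simpl; tauto. Qed.

Lemma lmul_reduced x s : reduced s -> reduced (lmul x s).
Proof.
  intros Hs. unfold lmul.
  destruct (dec _) as [_|Hx]; [exact Hs|].
  destruct s as [|y s'].
  - simpl; tauto.
  - destruct (dec (projT1 y = projT1 x)) as [e|ne].
    + destruct (dec _) as [_|Hz]; [exact (reduced_tail Hs)|].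
      destruct Hs as [_ [Hys Hs']].
      simpl. split; [exact Hz|]. split; [|exact Hs'].
      destruct s' as [|w s'']; [exact I|]. rewrite <- e. exact Hys.
    + simpl. split; [exact Hx|]. split; [intro E; apply ne; symmetry; exact E|].
      exact Hs.
Qed.

Definition word_mul (u v : list letter) : list letter := fold_right lmul v u.

Lemma word_mul_reduced u v : reduced v -> reduced (word_mul u v).
Proof. induction u; simpl; auto using lmul_reduced. Qed.

Definition fp_elt := {w : list letter | reduced w}.

Definition fp_mul (u v : fp_elt) : fp_elt :=
  exist _ (word_mul (proj1_sig u) (proj1_sig v))
          (@word_mul_reduced (proj1_sig u) (proj1_sig v) (proj2_sig v)).

Definition fp_one : fp_elt := exist _ [] I.

Definition free_product : RawMonoid :=
  {| rcar := fp_elt; rop := fp_mul; rone := fp_one |}.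

End FreeProduct.

From Stdlib Require Import List ClassicalEpsilon Fin ProofIrrelevance.
Import ListNotations.
Set Implicit Arguments.

(* A monoid S is weakly right coherent iff for all a, b the kernel of the two-generator
   presentation (k, s) |-> a_k s of aS ∪ bS is a finitely generated right congruence: finite
   presentability of a finitely generated right ideal does not depend on the chosen finite
   presentation, and the kernel of an n-generator presentation is generated by its two-generator
   subkernels.  This pair condition passes to retracts, and each M_i is a retract of the free
   product F, which gives one direction.  For the other, the pair condition is invariant under
   replacing a, b by R-related elements, and every element of F is R-related to a reduced word
   that is empty or whose last letter z in M_j has no right inverse.  For two such words a, b,
   either one is a right multiple of the other (then the annihilators of a and b plus one extra
   pair generate), or they share all but their last letters, which come from the same M_j (then
   as and bt determine the tails of s and t past their M_j-heads, and the kernel is the image of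
   the pair kernel of the last letters in M_j), or aF and bF are disjoint. *)

Section GeneratedCongruence.
Variables (S : RawMonoid) (n : nat).
Implicit Types (H : list (free_act S n * free_act S n)) (x y : free_act S n).

Lemma gen_congruence_right_congruence H : right_congruence (gen_congruence H).
Proof.
  repeat split.
  - intros x rho [Hr _] _. apply Hr.
  - intros x y Hxy rho Hrho HH. apply (proj1 (proj2 Hrho)). apply Hxy; auto.
  - intros x y z H1 H2 rho Hrho HH.
    apply (proj1 (proj2 (proj2 Hrho)) x y z); [apply H1 | apply H2]; auto.
  - intros x y t Hxy rho Hrho HH. apply (proj2 (proj2 (proj2 Hrho))). apply Hxy; auto.
Qed.

Lemma gen_refl H x : gen_congruence H x x.
Proof. apply (proj1 (gen_congruence_right_congruence H)). Qed.

Lemma gen_sym H x y : gen_congruence H x y -> gen_congruence H y x.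
Proof. apply (proj1 (proj2 (gen_congruence_right_congruence H))). Qed.

Lemma gen_trans H x y z :
  gen_congruence H x y -> gen_congruence H y z -> gen_congruence H x z.
Proof. apply (proj1 (proj2 (proj2 (gen_congruence_right_congruence H)))). Qed.

Lemma gen_mul H x y t :
  gen_congruence H x y -> gen_congruence H (free_act_mul x t) (free_act_mul y t).
Proof. apply (proj2 (proj2 (proj2 (gen_congruence_right_congruence H)))). Qed.

Lemma gen_in H x y : In (x, y) H -> gen_congruence H x y.
Proof. intros Hxy rho _ HH. exact (HH _ Hxy). Qed.

Lemma gen_min H (rho : free_act S n -> free_act S n -> Prop) :
  right_congruence rho -> (forall p, In p H -> rho (fst p) (snd p)) ->
  forall x y, gen_congruence H x y -> rho x y.
Proof. intros Hr HH x y G. apply G; auto. Qed.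

Lemma gen_incl H H' :
  incl H H' -> forall x y, gen_congruence H x y -> gen_congruence H' x y.
Proof.
  intros Hi. apply gen_min; [apply gen_congruence_right_congruence|].
  intros [x y] Hp. apply gen_in, Hi, Hp.
Qed.

Lemma gen_app_r H1 H2 x y : gen_congruence H2 x y -> gen_congruence (H1 ++ H2) x y.
Proof. apply gen_incl, incl_appr, incl_refl. Qed.

Lemma kernel_right_congruence (phi : free_act S n -> rcar S) :
  (forall x t, phi (free_act_mul x t) = rop S (phi x) t) ->
  right_congruence (fun x y => phi x = phi y).
Proof. intros Hphi. repeat split; intros; congruence. Qed.

Lemma gen_congruence_in_kernel H (phi : free_act S n -> rcar S) :
  (forall x t, phi (free_act_mul x t) = rop S (phi x) t) ->
  (forall p, In p H -> phi (fst p) = phi (snd p)) ->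
  forall x y, gen_congruence H x y -> phi x = phi y.
Proof.
  intros Hphi. apply (gen_min (rho := fun x y => phi x = phi y)), kernel_right_congruence, Hphi.
Qed.

Definition kernel_fg (phi : free_act S n -> rcar S) : Prop :=
  exists H, forall x y, phi x = phi y <-> gen_congruence H x y.

Lemma kernel_fg_ext (phi psi : free_act S n -> rcar S) :
  (forall x, phi x = psi x) -> kernel_fg phi -> kernel_fg psi.
Proof.
  intros E [H HH]. exists H. intros x y. rewrite <- !E. apply HH.
Qed.

End GeneratedCongruence.

Definition map_pairs (A B : Type) (f : A -> B) (H : list (A * A)) : list (B * B) :=
  map (fun p => (f (fst p), f (snd p))) H.

Lemma in_map_pairs (A B : Type) (f : A -> B) H x y :
  In (x, y) H -> In (f x, f y) (map_pairs f H).
Proof. intros Hxy. apply (in_map (fun p => (f (fst p), f (snd p))) H (x, y) Hxy). Qed.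

Lemma gen_congruence_map (S T : RawMonoid) n m (f : rcar S -> rcar T)
  (nu : free_act S n -> free_act T m) (H : list (free_act S n * free_act S n))
  (H' : list (free_act T m * free_act T m)) :
  (forall x t, nu (free_act_mul x t) = free_act_mul (nu x) (f t)) ->
  incl (map_pairs nu H) H' ->
  forall x y, gen_congruence H x y -> gen_congruence H' (nu x) (nu y).
Proof.
  intros Hnu HH. apply gen_min.
  - repeat split.
    + intros; apply gen_refl.
    + intros; apply gen_sym; auto.
    + intros x y z; apply gen_trans.
    + intros x y t Hxy. rewrite !Hnu. apply gen_mul; auto.
  - intros [x y] Hp. apply gen_in, HH, in_map_pairs, Hp.
Qed.

Fixpoint all_fin (n : nat) : list (Fin.t n) :=
  match n with 0 => [] | S n' => Fin.F1 :: map Fin.FS (all_fin n') end.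

Lemma all_fin_In n (k : Fin.t n) : In k (all_fin n).
Proof. induction k; simpl; auto using in_map. Qed.

Lemma fin1_F1 (k : Fin.t 1) : k = Fin.F1.
Proof.
  pattern k; apply Fin.caseS'; [reflexivity|].
  intros k'. inversion k'.
Qed.

Lemma fin2_cases (k : Fin.t 2) : k = Fin.F1 \/ k = Fin.FS Fin.F1.
Proof.
  pattern k; apply Fin.caseS'; [left; reflexivity|].
  intros k'. rewrite (fin1_F1 k'). right; reflexivity.
Qed.

Definition pair_gen (T : Type) (a b : T) (k : Fin.t 2) : T :=
  match k with Fin.F1 => a | Fin.FS _ => b end.

Lemma pair_gen_map (T U : Type) (f : T -> U) a b k :
  f (pair_gen a b k) = pair_gen (f a) (f b) k.
Proof. destruct (fin2_cases k) as [-> | ->]; reflexivity. Qed.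

Section Presentations.
Context {S : Monoid}.
Local Notation "x * y" := (op S x y).
Local Notation A n := (free_act (raw S) n).

Definition eval_gens n (g : Fin.t n -> carrier S) (x : A n) : carrier S :=
  g (fst x) * snd x.

Lemma eval_gens_mul n (g : Fin.t n -> carrier S) x t :
  eval_gens g (free_act_mul x t) = eval_gens g x * t.
Proof. apply op_assoc. Qed.

Definition pair_kernel_fg (a b : carrier S) : Prop := kernel_fg (eval_gens (pair_gen a b)).

Definition annihilator_fg (a : carrier S) : Prop := kernel_fg (eval_gens (n := 1) (fun _ => a)).

Definition act_ext n m (e : Fin.t n -> A m) (x : A n) : A m :=
  free_act_mul (e (fst x)) (snd x).

Lemma act_ext_mul n m (e : Fin.t n -> A m) x t :
  act_ext e (free_act_mul x t) = free_act_mul (act_ext e x) t.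
Proof. unfold act_ext, free_act_mul; simpl. rewrite op_assoc. reflexivity. Qed.

Definition relabel n m (e : Fin.t n -> Fin.t m) (x : A n) : A m := (e (fst x), snd x).

Lemma free_act_gen n (x : A n) : x = free_act_mul ((fst x, one S) : A n) (snd x).
Proof. destruct x as [k s]. unfold free_act_mul; simpl. rewrite op_one_l. reflexivity. Qed.

(* Finite generation of the kernel depends only on the image of the presentation: any two
   presentations of the same subact factor through each other. *)
Lemma kernel_fg_transfer n1 n2 (phi1 : A n1 -> carrier S) (phi2 : A n2 -> carrier S)
  (e : Fin.t n1 -> A n2) (e' : Fin.t n2 -> A n1) :
  (forall x t, phi1 (free_act_mul x t) = phi1 x * t) ->
  (forall x t, phi2 (free_act_mul x t) = phi2 x * t) ->
  (forall k, phi2 (e k) = phi1 (k, one S)) ->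
  (forall k, phi1 (e' k) = phi2 (k, one S)) ->
  kernel_fg phi2 -> kernel_fg phi1.
Proof.
  intros Hphi1 Hphi2 He He' [H2 HH2].
  set (th := act_ext e). set (ps := act_ext e').
  assert (Hth : forall x, phi2 (th x) = phi1 x).
  { intros x. rewrite (free_act_gen x) at 2.
    unfold th, act_ext. rewrite Hphi2, He, Hphi1. reflexivity. }
  assert (Hps : forall y, phi1 (ps y) = phi2 y).
  { intros y. rewrite (free_act_gen y) at 2.
    unfold ps, act_ext. rewrite Hphi1, He', Hphi2. reflexivity. }
  set (E := map (fun k => ((k, one S), ps (th (k, one S)))) (all_fin n1)).
  exists (map_pairs ps H2 ++ E).
  assert (Hret : forall x, gen_congruence (map_pairs ps H2 ++ E) x (ps (th x))).
  { intros x. rewrite (free_act_gen x). unfold ps, th. rewrite !act_ext_mul.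
    apply gen_mul, gen_in, in_or_app; right.
    apply in_map_iff. exists (fst x). split; [reflexivity | apply all_fin_In]. }
  intros x y; split.
  - intros Hxy. eapply gen_trans; [apply Hret|]. eapply gen_trans; [|apply gen_sym, Hret].
    apply (@gen_congruence_map _ _ _ _ (fun t => t) ps H2).
    + intros; apply act_ext_mul.
    + apply incl_appl, incl_refl.
    + apply HH2. rewrite !Hth. exact Hxy.
  - apply gen_congruence_in_kernel; [exact Hphi1|].
    intros p Hp. apply in_app_or in Hp as [Hp | Hp]; apply in_map_iff in Hp as [q [<- Hq]]; simpl.
    + rewrite !Hps. apply HH2, gen_in. destruct q; exact Hq.
    + rewrite Hps, Hth. reflexivity.
Qed.

Lemma kernel_fg_of_pairs :
  (forall a b, pair_kernel_fg a b) -> forall n (g : Fin.t n -> carrier S), kernel_fg (eval_gens g).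
Proof.
  intros HK n g.
  destruct (choice (fun (kl : Fin.t n * Fin.t n) H => forall x y,
     eval_gens (pair_gen (g (fst kl)) (g (snd kl))) x =
     eval_gens (pair_gen (g (fst kl)) (g (snd kl))) y <-> gen_congruence H x y))
    as [Hf HHf].
  { intros kl. apply HK. }
  set (e := fun kl : Fin.t n * Fin.t n => relabel (pair_gen (fst kl) (snd kl))).
  assert (He : forall kl x,
            eval_gens g (e kl x) = eval_gens (pair_gen (g (fst kl)) (g (snd kl))) x).
  { intros kl x. unfold eval_gens, e, relabel; simpl. rewrite pair_gen_map. reflexivity. }
  exists (flat_map (fun kl => map_pairs (e kl) (Hf kl)) (list_prod (all_fin n) (all_fin n))).
  intros [k s] [l t]. split.
  - intros Hxy.
    apply (@gen_congruence_map _ _ _ _ (fun t => t) (e (k, l)) (Hf (k, l))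
             _ (fun _ _ => eq_refl) ) with (x := (Fin.F1, s)) (y := (Fin.FS Fin.F1, t)).
    + intros p Hp. apply in_flat_map. exists (k, l).
      split; [apply in_prod; apply all_fin_In | exact Hp].
    + apply HHf. exact Hxy.
  - apply gen_congruence_in_kernel; [apply eval_gens_mul|].
    intros p Hp. apply in_flat_map in Hp as [kl [_ Hp]].
    apply in_map_iff in Hp as [q [<- Hq]]. simpl. rewrite !He.
    apply HHf, gen_in. destruct q; exact Hq.
Qed.

Theorem wrc_iff_pair_kernel_fg : weakly_right_coherent (raw S) <-> forall a b, pair_kernel_fg a b.
Proof.
  split.
  - intros W a b.
    destruct (W [a; b]) as [n [phi [H [Hphi [HJ [Hsur Hker]]]]]]; [discriminate|].
    destruct (choice (fun (k : Fin.t 2) x => phi x = pair_gen a b k)) as [xk Hxk].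
    { intros k. apply Hsur. exists (pair_gen a b k), (one S). split.
      - destruct (fin2_cases k) as [-> | ->]; simpl; auto.
      - simpl. rewrite op_one_r. reflexivity. }
    destruct (choice (fun (j : Fin.t n) (y : A 2) => phi (j, one S) = eval_gens (pair_gen a b) y))
      as [kv Hkv].
    { intros j. destruct (HJ (j, one S)) as [c [s [Hin Heq]]].
      simpl in Hin. destruct Hin as [<- | [<- | []]].
      - exists (Fin.F1, s). exact Heq.
      - exists (Fin.FS Fin.F1, s). exact Heq. }
    apply (kernel_fg_transfer (phi2 := phi) _ xk kv).
    + apply eval_gens_mul.
    + exact Hphi.
    + intros k. unfold eval_gens; simpl. rewrite op_one_r. apply Hxk.
    + intros j. symmetry. apply Hkv.
    + exists H. exact Hker.
  - intros HK X HX.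
    set (g := fun k : Fin.t (length X) => nth (proj1_sig (Fin.to_nat k)) X (one S)).
    destruct (kernel_fg_of_pairs HK g) as [H HH].
    exists (length X), (eval_gens g), H. repeat split.
    + apply eval_gens_mul.
    + intros [k s]. exists (g k), s. split; [|reflexivity].
      apply nth_In, (proj2_sig (Fin.to_nat k)).
    + intros a [b [s [Hb ->]]]. destruct (In_nth X b (one S) Hb) as [m [Hm Hn]].
      exists (Fin.of_nat_lt Hm, s). unfold eval_gens, g; simpl.
      rewrite Fin.to_nat_of_nat. simpl. f_equal. exact Hn.
    + apply HH.
    + apply HH.
Qed.

Lemma pair_kernel_fg_of_parts a b (H : list (A 2 * A 2)) :
  (forall s t, a * s = a * t -> gen_congruence H (Fin.F1, s) (Fin.F1, t)) ->
  (forall s t, b * s = b * t -> gen_congruence H (Fin.FS Fin.F1, s) (Fin.FS Fin.F1, t)) ->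
  (forall s t, a * s = b * t -> gen_congruence H (Fin.F1, s) (Fin.FS Fin.F1, t)) ->
  (forall p, In p H -> eval_gens (pair_gen a b) (fst p) = eval_gens (pair_gen a b) (snd p)) ->
  pair_kernel_fg a b.
Proof.
  intros Ha Hb Hab HH. exists H. intros [k s] [l t]. split.
  - unfold eval_gens; simpl. intros E.
    destruct (fin2_cases k) as [-> | ->], (fin2_cases l) as [-> | ->]; simpl in E.
    + apply Ha; auto.
    + apply Hab; auto.
    + apply gen_sym, Hab; auto.
    + apply Hb; auto.
  - apply gen_congruence_in_kernel; [apply eval_gens_mul | exact HH].
Qed.

Lemma annihilator_gen_at a (k : Fin.t 2) (Ha : list (A 1 * A 1)) (H : list (A 2 * A 2)) :
  (forall x y, eval_gens (fun _ => a) x = eval_gens (fun _ => a) y <-> gen_congruence Ha x y) ->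
  incl (map_pairs (relabel (fun _ => k)) Ha) H ->
  forall s t, a * s = a * t -> gen_congruence H (k, s) (k, t).
Proof.
  intros HHa Hincl s t E.
  apply (@gen_congruence_map _ _ _ _ (fun t => t) (relabel (fun _ => k)) Ha H
           (fun _ _ => eq_refl) Hincl (Fin.F1, s) (Fin.F1, t)).
  apply HHa. exact E.
Qed.

Lemma annihilator_fg_one : annihilator_fg (one S).
Proof.
  exists []. intros [k s] [l t]. rewrite (fin1_F1 k), (fin1_F1 l). split.
  - unfold eval_gens; simpl. rewrite !op_one_l. intros ->. apply gen_refl.
  - apply gen_congruence_in_kernel; [apply eval_gens_mul | intros p []].
Qed.

Lemma pair_kernel_fg_of_cross a b (C : list (A 2 * A 2)) :
  annihilator_fg a -> annihilator_fg b ->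
  (forall p, In p C -> eval_gens (pair_gen a b) (fst p) = eval_gens (pair_gen a b) (snd p)) ->
  (forall s t, a * s = b * t -> exists s' t',
     a * s' = a * s /\ b * t' = b * t /\ gen_congruence C (Fin.F1, s') (Fin.FS Fin.F1, t')) ->
  pair_kernel_fg a b.
Proof.
  intros [Ha HHa] [Hb HHb] HC Hcross.
  set (Ga := map_pairs (relabel (fun _ : Fin.t 1 => Fin.F1 : Fin.t 2)) Ha).
  set (Gb := map_pairs (relabel (fun _ : Fin.t 1 => Fin.FS Fin.F1 : Fin.t 2)) Hb).
  assert (Da : forall s t, a * s = a * t -> gen_congruence (Ga ++ Gb ++ C) (Fin.F1, s) (Fin.F1, t)).
  { eapply annihilator_gen_at; [exact HHa | apply incl_appl, incl_refl]. }
  assert (Db : forall s t, b * s = b * t ->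
            gen_congruence (Ga ++ Gb ++ C) (Fin.FS Fin.F1, s) (Fin.FS Fin.F1, t)).
  { eapply annihilator_gen_at; [exact HHb | apply incl_appr, incl_appl, incl_refl]. }
  apply (@pair_kernel_fg_of_parts a b (Ga ++ Gb ++ C) Da Db).
  - intros s t E. destruct (Hcross s t E) as [s' [t' [Es [Et G]]]].
    eapply gen_trans; [apply Da; symmetry; exact Es|].
    eapply gen_trans; [apply gen_app_r, gen_app_r, G|].
    apply Db. exact Et.
  - intros p Hp. apply in_app_or in Hp as [Hp | Hp]; [|apply in_app_or in Hp as [Hp | Hp]].
    + apply in_map_iff in Hp as [q [<- Hq]]. unfold eval_gens; simpl.
      apply HHa, gen_in. destruct q; exact Hq.
    + apply in_map_iff in Hp as [q [<- Hq]]. unfold eval_gens; simpl.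
      apply HHb, gen_in. destruct q; exact Hq.
    + apply HC, Hp.
Qed.

Lemma pair_kernel_fg_of_factor a b w :
  annihilator_fg a -> annihilator_fg b -> b = a * w -> pair_kernel_fg a b.
Proof.
  intros Ha Hb Hw.
  apply (pair_kernel_fg_of_cross (C := [((Fin.F1, w), (Fin.FS Fin.F1, one S))]) Ha Hb).
  - intros p [<- | []]. unfold eval_gens; simpl. rewrite op_one_r. symmetry. exact Hw.
  - intros s t E. exists (w * t), t. split; [|split; [reflexivity|]].
    + rewrite op_assoc, <- Hw. symmetry. exact E.
    + replace (Fin.FS Fin.F1, t) with (free_act_mul ((Fin.FS Fin.F1, one S) : A 2) t)
        by (unfold free_act_mul; simpl; rewrite op_one_l; reflexivity).
      change (Fin.F1, w * t) with (free_act_mul ((Fin.F1, w) : A 2) t).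
      apply gen_mul, gen_in. left; reflexivity.
Qed.

Lemma pair_kernel_fg_swap a b : pair_kernel_fg a b -> pair_kernel_fg b a.
Proof.
  set (e := fun k : Fin.t 2 => ((pair_gen (Fin.FS Fin.F1) Fin.F1 k, one S) : A 2)).
  apply (kernel_fg_transfer _ e e); try apply eval_gens_mul;
    intros k; destruct (fin2_cases k) as [-> | ->]; reflexivity.
Qed.

Lemma pair_kernel_fg_of_R_related a b a' b' u v u' v' :
  a' = a * u -> a = a' * v -> b' = b * u' -> b = b' * v' ->
  pair_kernel_fg a' b' -> pair_kernel_fg a b.
Proof.
  intros Ea' Ea Eb' Eb.
  apply (kernel_fg_transfer _ (fun k => (k, pair_gen v v' k)) (fun k => (k, pair_gen u u' k)));
    try apply eval_gens_mul;
    intros k; unfold eval_gens; destruct (fin2_cases k) as [-> | ->]; simpl;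
    rewrite op_one_r; congruence.
Qed.

End Presentations.

Lemma kernel_fg_retract (S T : Monoid) (f : carrier T -> carrier S) (r : carrier S -> carrier T)
  n (g : Fin.t n -> carrier T) :
  (forall x y, f (op T x y) = op S (f x) (f y)) ->
  (forall x y, r (op S x y) = op T (r x) (r y)) ->
  (forall x, r (f x) = x) ->
  kernel_fg (eval_gens (fun k => f (g k))) -> kernel_fg (eval_gens g).
Proof.
  intros Hf Hr Hrf [H HH].
  set (pr := fun x : free_act (raw S) n => ((fst x, r (snd x)) : free_act (raw T) n)).
  exists (map_pairs pr H). intros [k s] [l t]. split.
  - intros E.
    assert (G : gen_congruence H (k, f s) (l, f t)).
    { apply HH. unfold eval_gens in *; simpl in *. rewrite <- !Hf. f_equal. exact E. }
    apply (@gen_congruence_map (raw S) (raw T) n n r pr H (map_pairs pr H)) in G.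
    + unfold pr in G; simpl in G. rewrite !Hrf in G. exact G.
    + intros x t'. unfold pr, free_act_mul; simpl. rewrite Hr. reflexivity.
    + apply incl_refl.
  - apply gen_congruence_in_kernel; [apply eval_gens_mul|].
    intros p Hp. apply in_map_iff in Hp as [[[k1 s1] [k2 s2]] [<- Hq]].
    assert (E : eval_gens (fun k => f (g k)) (k1, s1) = eval_gens (fun k => f (g k)) (k2, s2))
      by (apply HH, gen_in, Hq).
    apply (f_equal r) in E. unfold eval_gens in *; simpl in *. rewrite !Hr, !Hrf in E. exact E.
Qed.

Lemma wrc_retract (S T : Monoid) (f : carrier T -> carrier S) (r : carrier S -> carrier T) :
  (forall x y, f (op T x y) = op S (f x) (f y)) ->
  (forall x y, r (op S x y) = op T (r x) (r y)) ->
  (forall x, r (f x) = x) ->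
  weakly_right_coherent (raw S) -> weakly_right_coherent (raw T).
Proof.
  intros Hf Hr Hrf WS. apply wrc_iff_pair_kernel_fg. intros a b.
  apply (@kernel_fg_retract S T f r _ _ Hf Hr Hrf).
  eapply kernel_fg_ext; [|apply wrc_iff_pair_kernel_fg, WS].
  intros x. unfold eval_gens. rewrite (pair_gen_map f). reflexivity.
Qed.

Lemma dec_eq_refl (T : Type) (a : T) : dec (a = a) = left eq_refl.
Proof. destruct (dec (a = a)) as [e | n]; [f_equal; apply proof_irrelevance | contradiction]. Qed.

Lemma app_cons_eq_cases (T : Type) (p q : list T) c d s t :
  p ++ c :: s = q ++ d :: t ->
  (p = q /\ c = d /\ s = t) \/ (exists r, q = p ++ c :: r) \/ (exists r, p = q ++ d :: r).
Proof.
  revert q. induction p as [|x p IH]; intros q E; destruct q as [|y q]; simpl in *;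
    injection E as <- E.
  - left; auto.
  - right; left. exists q; auto.
  - right; right. exists p; auto.
  - destruct (IH q E) as [[-> [-> ->]] | [[r ->] | [r ->]]]; auto.
    + right; left; exists r; auto.
    + right; right; exists r; auto.
Qed.

Definition right_invertible {S : Monoid} (z : carrier S) : Prop := exists u, op S z u = one S.

Section FreeProduct.
Variable Idx : Type.
Variable M : Idx -> Monoid.
Local Notation L := (letter M).
Local Notation lmul := (@lmul Idx M).
Local Notation word_mul := (@word_mul Idx M).
Local Notation reduced := (@reduced Idx M).
Local Notation letter_of j c := (existT (fun i => carrier (M i)) j c : letter M).

Lemma lmul_one j s : lmul (letter_of j (one (M j))) s = s.
Proof. unfold lmul; simpl. destruct (dec _) as [_ | n]; [reflexivity | contradiction]. Qed.

Lemma lmul_nil j c : c <> one (M j) -> lmul (letter_of j c) [] = [letter_of j c].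
Proof. intros Hc. unfold lmul; simpl. destruct (dec _); [contradiction | reflexivity]. Qed.

Lemma lmul_same j c d s : c <> one (M j) ->
  lmul (letter_of j c) (letter_of j d :: s) =
  if dec (op (M j) c d = one (M j)) then s else letter_of j (op (M j) c d) :: s.
Proof.
  intros Hc. unfold lmul; simpl. destruct (dec (c = _)); [contradiction|].
  rewrite dec_eq_refl. reflexivity.
Qed.

Lemma lmul_diff j c j' d s : c <> one (M j) -> j' <> j ->
  lmul (letter_of j c) (letter_of j' d :: s) = letter_of j c :: letter_of j' d :: s.
Proof.
  intros Hc Hj. unfold lmul; simpl. destruct (dec (c = _)); [contradiction|].
  destruct (dec (j' = j)); [contradiction | reflexivity].
Qed.

Lemma reduced_cons_inv j c s : reduced (letter_of j c :: s) ->
  c <> one (M j) /\ reduced s /\ match s with [] => True | y :: _ => j <> projT1 y end.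
Proof. simpl; tauto. Qed.

Lemma lmul_reduced_cons x s : reduced (x :: s) -> lmul x s = x :: s.
Proof.
  destruct x as [j c]. intros [Hc [Hh Hs]]. simpl in *.
  destruct s as [|[j' d] s']; [apply lmul_nil | apply lmul_diff]; auto.
Qed.

Lemma word_mul_nil_r u : reduced u -> word_mul u [] = u.
Proof.
  induction u as [|x u IH]; intros Hu; simpl; auto.
  rewrite IH by exact (reduced_tail Hu). apply lmul_reduced_cons, Hu.
Qed.

Lemma word_mul_app p v : reduced (p ++ v) -> word_mul p v = p ++ v.
Proof.
  induction p as [|x p IH]; simpl; intros H; auto.
  rewrite IH by exact (reduced_tail H). apply lmul_reduced_cons, H.
Qed.

Lemma lmul_lmul j (a b : carrier (M j)) s : reduced s ->
  lmul (letter_of j a) (lmul (letter_of j b) s) = lmul (letter_of j (op (M j) a b)) s.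
Proof.
  intros Hs.
  destruct (dec (b = one (M j))) as [-> | Hb]; [rewrite lmul_one, op_one_r; reflexivity|].
  destruct (dec (a = one (M j))) as [-> | Ha]; [rewrite lmul_one, op_one_l; reflexivity|].
  destruct s as [|[j' d] s'].
  { rewrite lmul_nil, lmul_same by auto.
    destruct (dec (op (M j) a b = one (M j))) as [E | E].
    - rewrite E, lmul_one. reflexivity.
    - rewrite lmul_nil; auto. }
  destruct (dec (j' = j)) as [<- | ne].
  2:{ rewrite lmul_diff, lmul_same by auto.
      destruct (dec (op (M j) a b = one (M j))) as [E | E].
      - rewrite E, lmul_one. reflexivity.
      - rewrite lmul_diff; auto. }
  apply reduced_cons_inv in Hs as [Hd [Hs' Hh]].
  rewrite lmul_same by auto.
  destruct (dec (op (M j') b d = one (M j'))) as [E1 | E1].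
  - rewrite lmul_reduced_cons by (simpl; auto).
    destruct (dec (op (M j') a b = one (M j'))) as [E2 | E2].
    + rewrite E2, lmul_one.
      assert (a = d) as ->
        by (rewrite <- (op_one_r (M j') a), <- E1, op_assoc, E2, op_one_l; reflexivity).
      reflexivity.
    + rewrite lmul_same by auto. rewrite <- op_assoc, E1, op_one_r.
      destruct (dec (a = one (M j'))); [contradiction | reflexivity].
  - rewrite lmul_same by auto.
    destruct (dec (op (M j') a b = one (M j'))) as [E2 | E2].
    + rewrite E2, lmul_one, op_assoc, E2, op_one_l.
      destruct (dec (d = one (M j'))); [contradiction | reflexivity].
    + rewrite lmul_same, op_assoc by auto. reflexivity.
Qed.

Lemma word_mul_lmul x s w : reduced s -> reduced w ->
  word_mul (lmul x s) w = lmul x (word_mul s w).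
Proof.
  destruct x as [j c]. intros Hs Hw.
  destruct (dec (c = one (M j))) as [-> | Hc]; [rewrite !lmul_one; reflexivity|].
  destruct s as [|[j' d] s']; [rewrite lmul_nil by auto; reflexivity|].
  destruct (dec (j' = j)) as [<- | ne]; [|rewrite lmul_diff by auto; reflexivity].
  rewrite lmul_same by auto. simpl.
  rewrite lmul_lmul by (apply word_mul_reduced, Hw).
  destruct (dec (op (M j') c d = one (M j'))) as [-> | E]; [|reflexivity].
  rewrite lmul_one. reflexivity.
Qed.

Lemma word_mul_assoc u v w : reduced v -> reduced w ->
  word_mul (word_mul u v) w = word_mul u (word_mul v w).
Proof.
  intros Hv Hw. induction u as [|x u IH]; simpl; auto.
  rewrite word_mul_lmul, IH; auto. apply word_mul_reduced, Hv.
Qed.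

Lemma fp_elt_eq (u v : fp_elt M) : proj1_sig u = proj1_sig v -> u = v.
Proof.
  destruct u as [u Hu], v as [v Hv]; simpl. intros <-.
  rewrite (proof_irrelevance _ Hu Hv). reflexivity.
Qed.

Definition free_product_monoid : Monoid.
Proof.
  refine {| carrier := fp_elt M; op := @fp_mul Idx M; one := fp_one M |}.
  - intros a b c. apply fp_elt_eq; simpl. symmetry.
    apply word_mul_assoc; [apply (proj2_sig b) | apply (proj2_sig c)].
  - intros a. apply fp_elt_eq. reflexivity.
  - intros a. apply fp_elt_eq; simpl. apply word_mul_nil_r, (proj2_sig a).
Defined.

Local Notation F := free_product_monoid.

Lemma val_mul (a b : carrier F) : proj1_sig (op F a b) = word_mul (proj1_sig a) (proj1_sig b).
Proof. reflexivity. Qed.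

Definition inj_word j (m : carrier (M j)) : list L :=
  if dec (m = one (M j)) then [] else [letter_of j m].

Lemma inj_word_reduced j m : reduced (inj_word j m).
Proof. unfold inj_word. destruct (dec _); simpl; auto. Qed.

Definition inj j (m : carrier (M j)) : carrier F := exist _ (inj_word j m) (inj_word_reduced j m).

Lemma inj_mul j a b : inj j (op (M j) a b) = op F (inj j a) (inj j b).
Proof.
  apply fp_elt_eq. simpl. unfold inj_word.
  destruct (dec (a = one (M j))) as [-> | Ha]; [rewrite op_one_l; reflexivity|].
  destruct (dec (b = one (M j))) as [-> | Hb].
  { rewrite op_one_r. simpl. rewrite lmul_nil by auto.
    destruct (dec (a = one (M j))); [contradiction | reflexivity]. }
  simpl. rewrite lmul_same by auto.
  destruct (dec (op (M j) a b = one (M j))); reflexivity.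
Qed.

Definition letter_proj i (x : L) : carrier (M i) :=
  match dec (projT1 x = i) with
  | left e => eq_rect _ (fun k => carrier (M k)) (projT2 x) _ e
  | right _ => one (M i)
  end.

Definition proj_word i (w : list L) : carrier (M i) :=
  fold_right (fun x acc => op (M i) (letter_proj i x) acc) (one (M i)) w.

Lemma letter_proj_one i j : letter_proj i (letter_of j (one (M j))) = one (M i).
Proof. unfold letter_proj; simpl. destruct (dec (j = i)) as [<- |]; reflexivity. Qed.

Lemma letter_proj_mul i j c d :
  letter_proj i (letter_of j (op (M j) c d)) =
  op (M i) (letter_proj i (letter_of j c)) (letter_proj i (letter_of j d)).
Proof.
  unfold letter_proj; simpl. destruct (dec (j = i)) as [<- |]; [reflexivity|].
  rewrite op_one_l. reflexivity.
Qed.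

Lemma proj_word_lmul i x s : proj_word i (lmul x s) = op (M i) (letter_proj i x) (proj_word i s).
Proof.
  destruct x as [j c].
  destruct (dec (c = one (M j))) as [-> | Hc].
  { rewrite lmul_one, letter_proj_one, op_one_l. reflexivity. }
  destruct s as [|[j' d] s']; [rewrite lmul_nil by auto; reflexivity|].
  destruct (dec (j' = j)) as [<- | ne]; [|rewrite lmul_diff by auto; reflexivity].
  rewrite lmul_same by auto. simpl. rewrite op_assoc, <- letter_proj_mul.
  destruct (dec (op (M j') c d = one (M j'))) as [-> | E]; [|reflexivity].
  rewrite letter_proj_one, op_one_l. reflexivity.
Qed.

Definition proj i (u : carrier F) : carrier (M i) := proj_word i (proj1_sig u).

Lemma proj_mul i a b : proj i (op F a b) = op (M i) (proj i a) (proj i b).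
Proof.
  unfold proj. rewrite val_mul. induction (proj1_sig a) as [|x u IH]; simpl.
  - rewrite op_one_l. reflexivity.
  - rewrite proj_word_lmul, IH, op_assoc. reflexivity.
Qed.

Lemma proj_inj i m : proj i (inj i m) = m.
Proof.
  unfold proj, inj, inj_word; simpl. destruct (dec (m = one (M i))) as [-> | E]; [reflexivity|].
  simpl. unfold letter_proj; simpl. rewrite dec_eq_refl. apply op_one_r.
Qed.

Definition head_at j (s : list L) : carrier (M j) :=
  match s with [] => one (M j) | y :: _ => letter_proj j y end.

Definition tail_at j (s : list L) : list L :=
  match s with [] => [] | y :: s' => if dec (projT1 y = j) then s' else s end.

Definition starts_off j (w : list L) : Prop :=
  match w with [] => True | y :: _ => projT1 y <> j end.

Lemma tail_at_reduced j s : reduced s -> reduced (tail_at j s).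
Proof. destruct s as [|y s']; simpl; auto. destruct (dec _); simpl; tauto. Qed.

Lemma lmul_not_right_invertible j z s : ~ right_invertible z -> reduced s ->
  lmul (letter_of j z) s = letter_of j (op (M j) z (head_at j s)) :: tail_at j s.
Proof.
  intros Hz Hs.
  assert (Hz1 : z <> one (M j)) by (intros ->; apply Hz; exists (one (M j)); apply op_one_l).
  destruct s as [|[j' d] s'].
  - simpl. rewrite op_one_r. apply lmul_nil, Hz1.
  - unfold head_at, tail_at, letter_proj; simpl. destruct (dec (j' = j)) as [<- | ne].
    + simpl. rewrite lmul_same by exact Hz1.
      destruct (dec _) as [E | E]; [exfalso; apply Hz; eexists; exact E | reflexivity].
    + rewrite op_one_r. apply lmul_diff; auto.
Qed.

Lemma inj_word_head_tail j s : reduced s -> word_mul (inj_word j (head_at j s)) (tail_at j s) = s.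
Proof.
  intros Hs. destruct s as [|[j' d] s'].
  - simpl. unfold inj_word. destruct (dec _) as [_ | n]; [reflexivity | contradiction].
  - unfold head_at, tail_at, letter_proj; simpl. destruct (dec (j' = j)) as [<- | ne].
    + simpl. unfold inj_word. destruct (dec (d = one (M j'))) as [E | E].
      * exfalso. apply (proj1 Hs), E.
      * apply lmul_reduced_cons, Hs.
    + unfold inj_word. destruct (dec _) as [_ | n]; [reflexivity | contradiction].
Qed.

Lemma head_tail_inj_app j m r : starts_off j r ->
  head_at j (inj_word j m ++ r) = m /\ tail_at j (inj_word j m ++ r) = r.
Proof.
  intros Hr. unfold inj_word. destruct (dec (m = one (M j))) as [-> | E].
  - destruct r as [|[j' d] r']; simpl; auto. unfold letter_proj; simpl in *.
    destruct (dec (j' = j)); [contradiction | auto].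
  - simpl. unfold letter_proj; simpl. rewrite dec_eq_refl. auto.
Qed.

Lemma reduced_inj_app j m r : starts_off j r -> reduced r -> reduced (inj_word j m ++ r).
Proof.
  intros Hs Hr. unfold inj_word. destruct (dec _) as [E | E]; simpl; auto.
  repeat split; auto. destruct r as [|y r']; simpl in *; auto.
Qed.

Lemma reduced_app_inv p q : reduced (p ++ q) -> reduced p /\ reduced q.
Proof.
  induction p as [|x p IH]; simpl; intros H; [split; auto; exact I|].
  destruct H as [H1 [H2 H3]]. destruct (IH H3) as [R1 R2]. split; auto.
  repeat split; auto. destruct p; simpl in *; auto.
Qed.

Lemma reduced_app_last p x x' v : reduced (p ++ [x]) -> projT1 x' = projT1 x ->
  reduced (x' :: v) -> reduced (p ++ x' :: v).
Proof.
  induction p as [|y p IH]; simpl; intros H E R; auto.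
  destruct H as [H1 [H2 H3]]. repeat split; auto.
  destruct p as [|z p']; simpl in *; congruence.
Qed.

Lemma word_mul_last p j z s : reduced (p ++ [letter_of j z]) -> ~ right_invertible z ->
  reduced s ->
  word_mul (p ++ [letter_of j z]) s = p ++ letter_of j (op (M j) z (head_at j s)) :: tail_at j s.
Proof.
  intros Hp Hz Hs. unfold word_mul. rewrite fold_right_app.
  fold (word_mul p (word_mul [letter_of j z] s)). simpl.
  rewrite lmul_not_right_invertible by auto. apply word_mul_app.
  apply (reduced_app_last p (letter_of j z)); auto.
  rewrite <- lmul_not_right_invertible by auto. apply lmul_reduced, Hs.
Qed.

Definition tail_in j (s : carrier F) : carrier F :=
  exist _ (tail_at j (proj1_sig s)) (tail_at_reduced j _ (proj2_sig s)).

Lemma inj_head_tail j (s : carrier F) : op F (inj j (head_at j (proj1_sig s))) (tail_in j s) = s.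
Proof. apply fp_elt_eq, inj_word_head_tail, (proj2_sig s). Qed.

Lemma mul_inj_last (c : carrier F) p j z u :
  proj1_sig c = p ++ [letter_of j z] -> ~ right_invertible z ->
  proj1_sig (op F c (inj j u)) = p ++ [letter_of j (op (M j) z u)].
Proof.
  intros Hc Hz. rewrite val_mul, Hc, word_mul_last; auto.
  - simpl. destruct (head_tail_inj_app j u [] I) as [E1 E2].
    rewrite app_nil_r in E1, E2. rewrite E1, E2. reflexivity.
  - rewrite <- Hc. apply (proj2_sig c).
  - apply inj_word_reduced.
Qed.

Lemma mul_last_cancel (c d : carrier F) p j z y s t :
  proj1_sig c = p ++ [letter_of j z] -> ~ right_invertible z ->
  proj1_sig d = p ++ [letter_of j y] -> ~ right_invertible y ->
  op F c s = op F d t ->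
  op (M j) z (head_at j (proj1_sig s)) = op (M j) y (head_at j (proj1_sig t)) /\
  tail_in j s = tail_in j t.
Proof.
  intros Hc Hz Hd Hy E. apply (f_equal (@proj1_sig _ _)) in E.
  rewrite !val_mul, Hc, Hd, !word_mul_last in E; auto;
    try (rewrite <- Hc; apply (proj2_sig c)); try (rewrite <- Hd; apply (proj2_sig d));
    try apply (proj2_sig s); try apply (proj2_sig t).
  apply app_inv_head in E. injection E as E1 E2.
  apply inj_pair2 in E1. split; [exact E1 | apply fp_elt_eq, E2].
Qed.

Lemma factor_of_prefix (a b : carrier F) p i z m r :
  proj1_sig a = p ++ [letter_of i z] -> ~ right_invertible z ->
  proj1_sig b = p ++ letter_of i (op (M i) z m) :: r -> exists w, b = op F a w.
Proof.
  intros Ha Hz Hb.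
  assert (Rb : reduced (p ++ letter_of i (op (M i) z m) :: r))
    by (rewrite <- Hb; apply (proj2_sig b)).
  apply reduced_app_inv in Rb as [_ Rr]. apply reduced_cons_inv in Rr as [_ [Rr Hh]].
  assert (Sr : starts_off i r) by (destruct r as [|y r']; simpl; auto).
  exists (exist _ (inj_word i m ++ r) (reduced_inj_app i m r Sr Rr)).
  apply fp_elt_eq. rewrite val_mul, Ha, word_mul_last; auto.
  - simpl. destruct (head_tail_inj_app i m r Sr) as [-> ->]. exact Hb.
  - rewrite <- Ha; apply (proj2_sig a).
  - apply reduced_inj_app; auto.
Qed.

(* The generators [c k] share a common prefix and end in non-right-invertible letters of one
   factor [M j], so [c k s = c l t] forces the tails of [s] and [t] past their [M j]-heads to
   agree; the kernel is therefore the image of the corresponding kernel in [M j]. *)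
Lemma kernel_fg_lift n p j (g : Fin.t n -> carrier (M j)) (c : Fin.t n -> carrier F) :
  (forall k, proj1_sig (c k) = p ++ [letter_of j (g k)]) ->
  (forall k, ~ right_invertible (g k)) ->
  kernel_fg (eval_gens g) -> kernel_fg (eval_gens c).
Proof.
  intros Hc Hg [H HH].
  set (nu := fun x : free_act (raw (M j)) n => ((fst x, inj j (snd x)) : free_act (raw F) n)).
  exists (map_pairs nu H). intros [k s] [l t]. split.
  - intros E. unfold eval_gens in E; simpl in E.
    destruct (mul_last_cancel p (Hc k) (Hg k) (Hc l) (Hg l) E) as [E1 E2].
    rewrite <- (inj_head_tail j s), <- (inj_head_tail j t), <- E2.
    change (gen_congruence (map_pairs nu H)
      (free_act_mul (nu (k, head_at j (proj1_sig s))) (tail_in j s))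
      (free_act_mul (nu (l, head_at j (proj1_sig t))) (tail_in j s))).
    apply gen_mul, (@gen_congruence_map (raw (M j)) (raw F) n n (inj j) nu H).
    + intros x u. unfold nu, free_act_mul; simpl. rewrite inj_mul. reflexivity.
    + apply incl_refl.
    + apply HH. exact E1.
  - apply gen_congruence_in_kernel; [apply eval_gens_mul|].
    intros q Hq. apply in_map_iff in Hq as [[[k1 u] [k2 v]] [<- Hq]].
    assert (E : eval_gens g (k1, u) = eval_gens g (k2, v)) by (apply HH, gen_in, Hq).
    apply fp_elt_eq. unfold eval_gens in *; simpl in E |- *.
    change (proj1_sig (op F (c k1) (inj j u)) = proj1_sig (op F (c k2) (inj j v))).
    rewrite !(mul_inj_last _ p _ (Hc _) (Hg _)), E. reflexivity.
Qed.

Definition right_normal (w : list L) : Prop :=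
  w = [] \/ exists p j z, w = p ++ [letter_of j z] /\ ~ right_invertible z.

(* A right-invertible last letter cancels: if [c u = 1] then [(p ++ [c]) inj(u) = p]. *)
Lemma right_normal_word w : reduced w -> exists w' u v,
  reduced w' /\ reduced u /\ reduced v /\ right_normal w' /\ w' = word_mul w u /\ w = word_mul w' v.
Proof.
  induction w as [|[j c] p IH] using rev_ind; intros Hw.
  { exists [], [], []. repeat split; auto. left; reflexivity. }
  destruct (reduced_app_inv _ _ Hw) as [Hp Hx].
  destruct (classic (right_invertible c)) as [[u Hu] | Hn].
  2:{ exists (p ++ [letter_of j c]), [], [].
      repeat split; auto; [right; exists p, j, c; auto | |]; symmetry; apply word_mul_nil_r, Hw. }
  destruct (IH Hp) as [p' [up [vp [R1 [R2 [R3 [N [E1 E2]]]]]]]].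
  assert (Hu1 : u <> one (M j)) by (intros ->; rewrite op_one_r in Hu; apply (proj1 Hx), Hu).
  assert (Cancel : word_mul (p ++ [letter_of j c]) (inj_word j u) = p).
  { unfold inj_word, word_mul at 1. destruct (dec _) as [E | _]; [contradiction|].
    rewrite fold_right_app. simpl. rewrite lmul_same by apply Hx.
    destruct (dec _) as [_ | n]; [apply word_mul_nil_r, Hp | contradiction]. }
  exists p', (word_mul (inj_word j u) up), (word_mul vp [letter_of j c]).
  repeat split; auto using word_mul_reduced.
  - rewrite <- word_mul_assoc, Cancel; auto using inj_word_reduced.
  - rewrite <- word_mul_assoc, <- E2; auto. symmetry. apply word_mul_app, Hw.
Qed.

Lemma R_related_right_normal (a : carrier F) : exists a' u v : carrier F,
  right_normal (proj1_sig a') /\ a' = op F a u /\ a = op F a' v.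
Proof.
  destruct a as [w Hw].
  destruct (right_normal_word w Hw) as [w' [u [v [R1 [R2 [R3 [N [E1 E2]]]]]]]].
  exists (exist _ w' R1), (exist _ u R2), (exist _ v R3).
  repeat split; [exact N | apply fp_elt_eq, E1 | apply fp_elt_eq, E2].
Qed.

Lemma common_multiple_last_letters (a b : carrier F) p i z q j y s t :
  proj1_sig a = p ++ [letter_of i z] -> ~ right_invertible z ->
  proj1_sig b = q ++ [letter_of j y] -> ~ right_invertible y ->
  op F a s = op F b t ->
  (p = q /\ i = j) \/ (exists w, b = op F a w) \/ (exists w, a = op F b w).
Proof.
  intros Ha Hz Hb Hy E. apply (f_equal (@proj1_sig _ _)) in E.
  rewrite !val_mul, Ha, Hb, !word_mul_last in E; auto;
    try (rewrite <- Ha; apply (proj2_sig a)); try (rewrite <- Hb; apply (proj2_sig b));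
    try apply (proj2_sig s); try apply (proj2_sig t).
  destruct (app_cons_eq_cases _ _ _ _ _ _ E) as [[E1 [E2 _]] | [[r Er] | [r Er]]].
  - left. split; [exact E1 | exact (f_equal (@projT1 _ _) E2)].
  - right; left.
    apply (factor_of_prefix a b p (head_at i (proj1_sig s)) (r ++ [letter_of j y]) Ha Hz).
    rewrite Hb, Er, <- app_assoc. reflexivity.
  - right; right.
    apply (factor_of_prefix b a q (head_at j (proj1_sig t)) (r ++ [letter_of i z]) Hb Hy).
    rewrite Ha, Er, <- app_assoc. reflexivity.
Qed.

Section FactorsCoherent.
Hypothesis kernel_fg_factors : forall j n (g : Fin.t n -> carrier (M j)), kernel_fg (eval_gens g).

Lemma annihilator_fg_right_normal (a : carrier F) : right_normal (proj1_sig a) -> annihilator_fg a.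
Proof.
  intros [Ha | [p [j [z [Ha Hz]]]]].
  - replace a with (one F) by (apply fp_elt_eq; symmetry; exact Ha). apply annihilator_fg_one.
  - apply (kernel_fg_lift p (g := fun _ => z)); auto.
Qed.

Lemma pair_kernel_fg_right_normal (a b : carrier F) :
  right_normal (proj1_sig a) -> right_normal (proj1_sig b) -> pair_kernel_fg a b.
Proof.
  intros Na Nb.
  pose proof (annihilator_fg_right_normal a Na) as Aa.
  pose proof (annihilator_fg_right_normal b Nb) as Ab.
  destruct (classic (exists w, b = op F a w)) as [[w Hw] | Hba].
  { exact (pair_kernel_fg_of_factor w Aa Ab Hw). }
  destruct (classic (exists w, a = op F b w)) as [[w Hw] | Hab].
  { exact (pair_kernel_fg_swap (pair_kernel_fg_of_factor w Ab Aa Hw)). }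
  destruct Na as [Ha | [p [i [z [Ha Hz]]]]].
  { exfalso. apply Hba. exists b. replace a with (one F) by (apply fp_elt_eq; symmetry; exact Ha).
    symmetry. apply op_one_l. }
  destruct Nb as [Hb | [q [j [y [Hb Hy]]]]].
  { exfalso. apply Hab. exists a. replace b with (one F) by (apply fp_elt_eq; symmetry; exact Hb).
    symmetry. apply op_one_l. }
  destruct (classic (p = q /\ i = j)) as [[<- <-] | Hpq].
  - apply (kernel_fg_lift p (g := pair_gen z y)); auto;
      intros k; destruct (fin2_cases k) as [-> | ->]; auto.
  - apply (pair_kernel_fg_of_cross (C := []) Aa Ab); [intros ? [] |].
    intros s t E. exfalso.
    destruct (common_multiple_last_letters p q Ha Hz Hb Hy E) as [? | [? | ?]]; auto.
Qed.

Lemma pair_kernel_fg_free_product (a b : carrier F) : pair_kernel_fg a b.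
Proof.
  destruct (R_related_right_normal a) as [a' [u [v [Na [Ea' Ea]]]]].
  destruct (R_related_right_normal b) as [b' [u' [v' [Nb [Eb' Eb]]]]].
  apply (pair_kernel_fg_of_R_related u v u' v' Ea' Ea Eb' Eb).
  apply pair_kernel_fg_right_normal; assumption.
Qed.

End FactorsCoherent.
End FreeProduct.

Theorem mainTheorem2 (I : Type) (M : I -> Monoid) :
  weakly_right_coherent (free_product M) <->
  (forall i : I, weakly_right_coherent (raw (M i))).
Proof.
  change (free_product M) with (raw (free_product_monoid M)). split.
  - intros HF i.
    apply (wrc_retract _ (@inj _ M i) (proj i));
      [apply inj_mul | apply proj_mul | apply proj_inj | exact HF].
  - intros HM. apply wrc_iff_pair_kernel_fg. apply pair_kernel_fg_free_product.
    intros j. apply kernel_fg_of_pairs, wrc_iff_pair_kernel_fg, HM.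
Qed.
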